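(* Let $\mathbf X\in\mathbb R^{n\times d}$ have full column rank and let $d\le k\le n$. Sample a set $S_\circ\subseteq\{1,\dots,n\}$ with $|S_\circ|=d$ with probability $\det(\mathbf X_{S_\circ})^2/\det(\mathbf X^\top\mathbf X)$, and then, given $S_\circ$, sample a uniformly random subset $R\subseteq\{1,\dots,n\}\setminus S_\circ$ of size $k-d$. Then $S=S_\circ\cup R$ satisfies, for every $S\subseteq\{1,\dots,n\}$ with $|S|=k$, $P(S)=\dfrac{\det(\mathbf X_S^\top\mathbf X_S)}{\binom{n-d}{k-d}\det(\mathbf X^\top\mathbf X)}$.
   Context: For $T\subseteq\{1,\dots,n\}$, $\mathbf X_T$ denotes the submatrix of $\mathbf X$ consisting of the rows indexed by $T$. *)

From HB Require Import structures.
From mathcomp Require Import all_boot all_order all_algebra.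
Set Implicit Arguments. Unset Strict Implicit. Unset Printing Implicit Defensive.
Import Order.TTheory GRing.Theory Num.Theory.
Local Open Scope ring_scope.

(* subrows X T m : the m x d matrix whose i-th row is the i-th row of X
   indexed by T (rows of T taken in increasing order); rows beyond #|T|
   are zero.  With m = #|T| this is exactly X_T. *)
Definition subrows (R : pzRingType) (n d : nat) (X : 'M[R]_(n, d))
  (T : {set 'I_n}) (m : nat) : 'M[R]_(m, d) :=
  \matrix_(i < m, j < d)
    match nth None (map Some (enum T)) i with
    | Some r => X r j
    | None => 0
    end.

Definition Xsub (R : pzRingType) (n d : nat) (X : 'M[R]_(n, d))
  (T : {set 'I_n}) : 'M[R]_(#|T|, d) := subrows X T #|T|.

Definition p_first (R : realFieldType) (n d : nat) (X : 'M[R]_(n, d))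
  (S0 : {set 'I_n}) : R :=
  if #|S0| == d then (\det (subrows X S0 d)) ^+ 2 / \det (X^T *m X) else 0.

Definition p_second (R : realFieldType) (n d k : nat)
  (S0 Rr : {set 'I_n}) : R :=
  if (Rr \subset ~: S0) && (#|Rr| == (k - d)%N) then
    1 / (#|[set T : {set 'I_n} | (T \subset ~: S0) && (#|T| == (k - d)%N)]|)%:R
  else 0.

Definition prob_S (R : realFieldType) (n d k : nat) (X : 'M[R]_(n, d))
  (S : {set 'I_n}) : R :=
  \sum_(S0 : {set 'I_n}) \sum_(Rr : {set 'I_n} | S0 :|: Rr == S)
     p_first X S0 * @p_second R n d k S0 Rr.

From HB Require Import structures.
From mathcomp Require Import all_boot all_order all_algebra all_fingroup.
Set Implicit Arguments. Unset Strict Implicit. Unset Printing Implicit Defensive.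
Import Order.TTheory GRing.Theory Num.Theory.
Local Open Scope ring_scope.

(* By Cauchy-Binet, det (X_S^T X_S) is the sum of det (X_T)^2 over the
   d-subsets T of S.  On the other hand S arises from the two-stage sampling
   exactly when S_o is a d-subset of S and R = S \ S_o, and the second stage
   picks that R with probability 1 / C(n-d, k-d) whatever S_o is.  Summing
   over S_o therefore gives the same sum of squared minors, divided by
   C(n-d, k-d) det (X^T X). *)

Section CauchyBinet.

Variables (R : comPzRingType) (d n : nat).

Lemma det_mulmx_ffun_sum (A : 'M[R]_(d, n)) (B : 'M[R]_(n, d)) :
  \det (A *m B) =
  \sum_(f : {ffun 'I_d -> 'I_n}) (\prod_i A i (f i)) * \det (rowsub f B).
Proof.
rewrite /determinant.
transitivity (\sum_(s : 'S_d) \sum_(f : {ffun 'I_d -> 'I_n})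
   (-1) ^+ s * ((\prod_i A i (f i)) * \prod_i B (f i) (s i))).
  apply: eq_bigr => s _; rewrite -big_distrr /=; congr (_ * _).
  under eq_bigr do rewrite mxE.
  by rewrite bigA_distr_bigA; apply: eq_bigr => f _; rewrite big_split.
rewrite exchange_big; apply: eq_bigr => f _ /=; rewrite big_distrr.
apply: eq_bigr => s _; rewrite mulrCA; congr (_ * (_ * _)).
by apply: eq_bigr => i _; rewrite mxE.
Qed.

Lemma det_rowsub_noninj (B : 'M[R]_(n, d)) (f : 'I_d -> 'I_n) :
  ~~ injectiveb f -> \det (rowsub f B) = 0.
Proof.
case/injectivePn => i1 [i2 neq_i12 eq_f12].
by apply: (determinant_alternate neq_i12) => j; rewrite !mxE eq_f12.
Qed.

(* The default [x0] is never reached on sets of cardinality [d]. *)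
Definition enum_at (x0 : 'I_n) (T : {set 'I_n}) (i : 'I_d) : 'I_n :=
  nth x0 (enum T) i.

Variable x0 : 'I_n.

Lemma index_enum_lt (T : {set 'I_n}) x : #|T| = d -> x \in T ->
  (index x (enum T) < d)%N.
Proof. by move=> cardT Tx; rewrite -cardT cardE index_mem mem_enum. Qed.

Lemma enum_at_inj (T : {set 'I_n}) : #|T| = d -> injective (enum_at x0 T).
Proof.
move=> cardT i j /eqP; rewrite /enum_at nth_uniq ?enum_uniq -?cardE ?cardT //.
by move/eqP/val_inj.
Qed.

Lemma enum_at_index (T : {set 'I_n}) x (cardT : #|T| = d) (Tx : x \in T) :
  enum_at x0 T (Ordinal (index_enum_lt cardT Tx)) = x.
Proof. by rewrite /enum_at nth_index ?mem_enum. Qed.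

Lemma enum_at_in (T : {set 'I_n}) i : #|T| = d -> enum_at x0 T i \in T.
Proof. by move=> cardT; rewrite -mem_enum mem_nth // -cardE cardT. Qed.

(* An injection ['I_d -> 'I_n] is the same as its image [T] together with a
   permutation of ['I_d] describing the order in which it enumerates [T]. *)
Definition ffun_of_enum (p : {set 'I_n} * 'S_d) : {ffun 'I_d -> 'I_n} :=
  [ffun i => enum_at x0 p.1 (p.2 i)].

Definition enum_of_ffun (f : {ffun 'I_d -> 'I_n}) : {set 'I_n} * 'S_d :=
  (f @: setT, odflt 1%g [pick s : 'S_d | ffun_of_enum (f @: setT, s) == f]).

Lemma enum_of_ffunK (f : {ffun 'I_d -> 'I_n}) :
  injectiveb f -> ffun_of_enum (enum_of_ffun f) = f.
Proof.
move=> /injectiveP inj_f; rewrite /enum_of_ffun; set T := f @: setT.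
have cardT : #|T| = d by rewrite card_imset // cardsT card_ord.
have Tf i : f i \in T by apply: imset_f.
pose s i := Ordinal (index_enum_lt cardT (Tf i)).
have inj_s : injective s.
  by move=> i j /(congr1 (enum_at x0 T)); rewrite !enum_at_index => /inj_f.
case: pickP => [s' /eqP -> // | no_perm].
suff : ffun_of_enum (T, perm inj_s) == f by rewrite no_perm.
by apply/eqP/ffunP => i; rewrite ffunE permE enum_at_index.
Qed.

Lemma ffun_of_enumK (T : {set 'I_n}) (s : 'S_d) :
  #|T| = d -> enum_of_ffun (ffun_of_enum (T, s)) = (T, s).
Proof.
move=> cardT.
have imT : ffun_of_enum (T, s) @: setT = T.
  apply/setP => x; apply/imsetP/idP => [[i _ ->] | Tx].
    by rewrite ffunE enum_at_in.
  exists ((s^-1)%g (Ordinal (index_enum_lt cardT Tx))) => //.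
  by rewrite ffunE /= permKV enum_at_index.
rewrite /enum_of_ffun imT; congr pair.
case: pickP => [s' /eqP/ffunP eq_s | ]; last by move/(_ s); rewrite eqxx.
apply/permP => i; move: (eq_s i); rewrite !ffunE; exact: enum_at_inj.
Qed.

Lemma ffun_of_enum_inj (T : {set 'I_n}) (s : 'S_d) :
  #|T| = d -> injectiveb (ffun_of_enum (T, s)).
Proof.
move=> cardT; apply/injectiveP => i j; rewrite !ffunE => /(enum_at_inj cardT).
exact: perm_inj.
Qed.

Lemma det_colsub_rowsub_enum (A : 'M[R]_(d, n)) (B : 'M[R]_(n, d))
    (T : {set 'I_n}) :
  \det (colsub (enum_at x0 T) A) * \det (rowsub (enum_at x0 T) B) =
  \sum_(s : 'S_d) (\prod_i A i (ffun_of_enum (T, s) i))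
                   * \det (rowsub (ffun_of_enum (T, s)) B).
Proof.
rewrite [\det (colsub _ _)]/determinant big_distrl; apply: eq_bigr => s _ /=.
have -> : rowsub (ffun_of_enum (T, s)) B = perm_mx s *m rowsub (enum_at x0 T) B.
  by rewrite -row_permE; apply/matrixP => i j; rewrite !mxE ffunE.
rewrite det_mulmx det_perm [RHS]mulrCA mulrA; congr (_ * _ * _).
by apply: eq_bigr => i _; rewrite !mxE ffunE.
Qed.

Lemma cauchy_binet_enum (A : 'M[R]_(d, n)) (B : 'M[R]_(n, d)) :
  \det (A *m B) = \sum_(T : {set 'I_n} | #|T| == d)
     \det (colsub (enum_at x0 T) A) * \det (rowsub (enum_at x0 T) B).
Proof.
rewrite det_mulmx_ffun_sum (bigID (fun f : {ffun 'I_d -> 'I_n} => injectiveb f)) /=.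
rewrite [X in _ + X]big1 ?addr0; last by move=> f /det_rowsub_noninj ->; rewrite mulr0.
rewrite (reindex_onto ffun_of_enum enum_of_ffun) /=; last exact: enum_of_ffunK.
rewrite (eq_bigl (fun p : {set 'I_n} * 'S_d => (#|p.1| == d) && true)); last first.
  move=> [T s] /=; rewrite andbT.
  apply/andP/eqP => [[/injectiveP inj_f /eqP eq_p] | cardT].
    by rewrite -[T](congr1 fst eq_p) card_imset // cardsT card_ord.
  by rewrite ffun_of_enum_inj // ffun_of_enumK.
rewrite -(pair_big_dep (fun T : {set 'I_n} => #|T| == d) (fun _ _ => true)
   (fun T s => (\prod_i A i (ffun_of_enum (T, s) i))
               * \det (rowsub (ffun_of_enum (T, s)) B))) /=.
by apply: eq_bigr => T _; rewrite det_colsub_rowsub_enum.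
Qed.

End CauchyBinet.

Lemma subrows_enum_at (R : pzRingType) n m d (X : 'M[R]_(n, m)) x0
    (T : {set 'I_n}) :
  #|T| = d -> subrows X T d = rowsub (enum_at x0 T) X.
Proof.
by move=> cardT; apply/matrixP => i j; rewrite !mxE (nth_map x0) // -cardE cardT.
Qed.

Lemma cauchy_binet (R : comPzRingType) d n (A : 'M[R]_(d, n)) (B : 'M[R]_(n, d)) :
  \det (A *m B) =
  \sum_(T : {set 'I_n} | #|T| == d) \det (subrows A^T T d) * \det (subrows B T d).
Proof.
case: d A B => [|d] A B.
  rewrite det_mx00 (eq_bigl (pred1 set0)) => [|T]; last by rewrite cards_eq0.
  by rewrite big_pred1_eq !det_mx00 mulr1.
case: n A B => [|n] A B.
  rewrite thinmx0 mul0mx det0 big_pred0 // => T.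
  by have := max_card (mem T); rewrite card_ord leqn0 => /eqP ->.
rewrite (cauchy_binet_enum ord0); apply: eq_bigr => T /eqP cardT.
rewrite !(subrows_enum_at _ ord0) // -det_tr; congr (\det _ * _).
by apply/matrixP => i j; rewrite !mxE.
Qed.

Definition mask_rows (R : pzRingType) n d (X : 'M[R]_(n, d)) (S : {set 'I_n}) :
  'M[R]_(n, d) := \matrix_(i, j) if i \in S then X i j else 0.

Section VolumeSampling.

Variables (R : comPzRingType) (n d : nat) (X : 'M[R]_(n, d)).

Lemma Xsub_gram (S : {set 'I_n}) :
  (Xsub X S)^T *m Xsub X S = (mask_rows X S)^T *m mask_rows X S.
Proof.
apply/matrixP => a b; rewrite !mxE.
transitivity (\sum_(x in S) X x a * X x b).
  rewrite [RHS]big_enum_val; apply: eq_bigr => i _; rewrite !mxE.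
  have lt_i : (i < size (enum S))%N by rewrite -cardE.
  by rewrite (nth_map (enum_val i)) // -enum_val_nth.
rewrite big_mkcond /=; apply: eq_bigr => i _; rewrite !mxE.
by case: (i \in S); rewrite ?mul0r.
Qed.

Lemma subrows_mask_rows (S T : {set 'I_n}) m :
  T \subset S -> subrows (mask_rows X S) T m = subrows X T m.
Proof.
move=> sTS; apply/matrixP => i j; rewrite !mxE.
case Ei: (nth None _ i) => [r|] //; rewrite mxE (subsetP sTS) //.
have : Some r \in map Some (enum T).
  rewrite -Ei mem_nth // ltnNge; apply: contraTN isT => /(nth_default None).
  by rewrite Ei.
by rewrite mem_map ?mem_enum //; apply: Some_inj.
Qed.

Lemma det_subrows_mask_rows_notsub (S T : {set 'I_n}) :
  #|T| = d -> ~~ (T \subset S) -> \det (subrows (mask_rows X S) T d) = 0.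
Proof.
move=> cardT /subsetPn [x Tx notSx].
rewrite (expand_det_row _ (Ordinal (index_enum_lt cardT Tx))) big1 // => j _.
have lt_x : (index x (enum T) < size (enum T))%N by rewrite index_mem mem_enum.
by rewrite !mxE (nth_map x) // nth_index ?mem_enum // mxE (negbTE notSx) mul0r.
Qed.

Lemma det_gram_Xsub (S : {set 'I_n}) :
  \det ((Xsub X S)^T *m Xsub X S) =
  \sum_(T : {set 'I_n} | (T \subset S) && (#|T| == d)) \det (subrows X T d) ^+ 2.
Proof.
rewrite Xsub_gram cauchy_binet trmxK [RHS]big_mkcondl /=.
apply: eq_bigr => T /eqP cardT; rewrite -expr2.
case: ifP => [sTS | /negbT notsTS]; first by rewrite subrows_mask_rows.
by rewrite det_subrows_mask_rows_notsub // expr0n.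
Qed.

End VolumeSampling.

Lemma setUD_subsetC (T : finType) (A B : {set T}) :
  B \subset ~: A -> (A :|: B) :\: A = B.
Proof. by move=> /setIidPl sBA; rewrite setDUl setDv set0U setDE. Qed.

Lemma sum_p_second (R : realFieldType) n d k (S0 S : {set 'I_n}) :
  #|S| = k -> #|S0| = d -> S0 \subset S ->
  \sum_(Rr : {set 'I_n} | S0 :|: Rr == S) @p_second R n d k S0 Rr =
  ('C(n - d, k - d))%:R^-1.
Proof.
move=> cardS cardS0 sS0S.
have S0US : S0 :|: (S :\: S0) = S by rewrite setDE setUIr setUCr setIT; apply/setUidPr.
rewrite (bigD1 (S :\: S0)) ?S0US //= big1 ?addr0 => [|Rr /andP [/eqP S0URr neqRr]].
  have cardSC0 : #|~: S0| = (n - d)%N.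
    have := cardsC S0; rewrite card_ord cardS0 => def_n.
    by rewrite -[X in (X - d)%N]def_n addKn.
  rewrite /p_second subsetDr cardsD (setIidPr sS0S) cardS cardS0 eqxx cards_draws.
  by rewrite cardSC0 div1r.
rewrite /p_second; case: ifP => [/andP [sRrS0 _] | _] //.
by case/eqP: neqRr; rewrite -S0URr setUD_subsetC.
Qed.

Theorem mainTheorem6 (R : realFieldType) (n d k : nat) (X : 'M[R]_(n, d))
  (hrank : \rank X = d) (hdk : (d <= k)%N) (hkn : (k <= n)%N)
  (S : {set 'I_n}) (hS : #|S| = k) :
  @prob_S R n d k X S =
  \det ((Xsub X S)^T *m Xsub X S) / ('C(n - d, k - d)%:R * \det (X^T *m X)).
Proof.
rewrite /prob_S det_gram_Xsub invfM big_distrl /=.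
rewrite [LHS](bigID (fun S0 : {set 'I_n} => (S0 \subset S) && (#|S0| == d))) /=.
rewrite [X in _ + X]big1 ?addr0 => [|S0 /nandP [notsS0S | cardS0]]; last 2 first.
- by rewrite big1 // => Rr /eqP S0URr; case/negP: notsS0S; rewrite -S0URr subsetUl.
- by rewrite big1 // => Rr _; rewrite /p_first (negbTE cardS0) mul0r.
apply: eq_bigr => S0 /andP [sS0S /eqP cardS0].
rewrite -big_distrr sum_p_second // /p_first cardS0 eqxx.
by rewrite /= [RHS]mulrA mulrAC.
Qed.
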